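(* Let $(\mathcal{S},\mathcal{R})$ be an $r$-complete positive presentation. Then any two elements of $\mathrm{Mon}(\mathcal{S};\mathcal{R})$ admit a common right multiple if and only if the following condition holds: there exists a set $\mathcal{S}'$ with $\mathcal{S}\subseteq\mathcal{S}'\subseteq\mathcal{S}^*$ such that for all $u,v\in\mathcal{S}'$ there exist $u',v'\in\mathcal{S}'$ satisfying $(uv')^{-1}(vu')\curvearrowright_r\varepsilon$.
   Context: A positive presentation is a pair $(\mathcal{S},\mathcal{R})$ where $\mathcal{S}$ is a nonempty set of letters and $\mathcal{R}$ is a family of relations $u=v$, i.e. unordered pairs $\{u,v\}$ of nonempty words in the free monoid $\mathcal{S}^*$ (letters are regarded as length-one words). $\varepsilon$ denotes the empty word; $\equiv$ is the smallest congruence on $\mathcal{S}^*$ containing all pairs of $\mathcal{R}$, and $\mathrm{Mon}(\mathcal{S};\mathcal{R})=\mathcal{S}^*/{\equiv}$. An element $z$ is a common right multiple of $x,y$ if $z=xa=yb$ for some $a,b$. Let $\mathcal{S}^{-1}=\{s^{-1}:s\in\mathcal{S}\}$ be a disjoint copy of $\mathcal{S}$; for $u\in\mathcal{S}^*$, $u^{-1}$ is obtained by reversing the order of the letters of $u$ and replacing each $s$ by $s^{-1}$. Right reversing: for words $\mathbf{w},\mathbf{w}'$ on $\mathcal{S}\cup\mathcal{S}^{-1}$ we write $\mathbf{w}\curvearrowright_r\mathbf{w}'$ if $\mathbf{w}'$ is obtained from $\mathbf{w}$ by a finite (possibly empty) sequence of steps, each of which either deletes a subword $u^{-1}u$ with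 $u\in\mathcal{S}^*$ nonempty, or replaces a subword $u^{-1}v$ with $u,v\in\mathcal{S}^*$ nonempty by a word $v'u'^{-1}$ with $u',v'\in\mathcal{S}^*$ such that $uv'=vu'$ is a relation of $\mathcal{R}$. $(\mathcal{S},\mathcal{R})$ is $r$-complete if for all $u,v,u',v'\in\mathcal{S}^*$ with $uv'\equiv vu'$ there exist $u'',v'',w\in\mathcal{S}^*$ with $u^{-1}v\curvearrowright_r v''u''^{-1}$, $u'\equiv u''w$ and $v'\equiv v''w$. *)

From Stdlib Require Import List.
Import ListNotations.
Set Implicit Arguments.

(* A family of relations on S^* : R u v means the relation u = v belongs to the
   family. Relations are unordered pairs, so we symmetrize. *)
Definition relR {S : Type} (R : list S -> list S -> Prop) (x y : list S) : Prop :=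
  R x y \/ R y x.

Inductive cong {S : Type} (R : list S -> list S -> Prop) : list S -> list S -> Prop :=
| cong_base : forall u v, R u v -> cong R u v
| cong_refl : forall u, cong R u u
| cong_sym : forall u v, cong R u v -> cong R v u
| cong_trans : forall u v w, cong R u v -> cong R v w -> cong R u w
| cong_cat : forall u v u' v', cong R u v -> cong R u' v' -> cong R (u ++ u') (v ++ v').

(* Signed words: (true, s) is the letter s, (false, s) is s^{-1}. *)
Definition pos {S : Type} (u : list S) : list (bool * S) := map (fun s => (true, s)) u.
Definition inv {S : Type} (u : list S) : list (bool * S) := rev (map (fun s => (false, s)) u).

Inductive rstep {S : Type} (R : list S -> list S -> Prop) :
    list (bool * S) -> list (bool * S) -> Prop :=
| rstep_del : forall a b u, u <> [] ->
    rstep R (a ++ inv u ++ pos u ++ b) (a ++ b)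
| rstep_rel : forall a b u v u' v', u <> [] -> v <> [] ->
    relR R (u ++ v') (v ++ u') ->
    rstep R (a ++ inv u ++ pos v ++ b) (a ++ pos v' ++ inv u' ++ b).

Inductive reverses {S : Type} (R : list S -> list S -> Prop) :
    list (bool * S) -> list (bool * S) -> Prop :=
| rev_refl : forall w, reverses R w w
| rev_step : forall w w1 w2, rstep R w w1 -> reverses R w1 w2 -> reverses R w w2.

Definition r_complete {S : Type} (R : list S -> list S -> Prop) : Prop :=
  forall u v u' v' : list S, cong R (u ++ v') (v ++ u') ->
    exists u'' v'' w : list S,
      reverses R (inv u ++ pos v) (pos v'' ++ inv u'') /\
      cong R u' (u'' ++ w) /\ cong R v' (v'' ++ w).

(* Read a signed word as a path in the right Cayley graph of Mon(S;R): a
   letter s steps from x to xs, a letter s^-1 steps back from zs to z.  Both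
   kinds of reversing step preserve the endpoints of such paths, so
   u^-1 v ~> v' u'^-1 forces u v' = v u' in the monoid.
   (=>) Take S' = S^*.  By r-completeness u^-1 v ~> v'' u''^-1 for some
   common multiple u v'' = v u'', and then
   (u v'')^-1 (v u'') = v''^-1 u^-1 v u'' ~> v''^-1 v'' u''^-1 u'' ~> e.
   (<=) The letters lie in S', and S' is closed under common right multiples;
   filling a grid letter by letter yields a common right multiple of any two
   words. *)
From Stdlib Require Import List.
Import ListNotations.
Set Implicit Arguments.
Unset Strict Implicit.

Section Reversing.
Variable S : Type.
Variable R : list S -> list S -> Prop.

Lemma cong_catl (a x y : list S) : cong R x y -> cong R (a ++ x) (a ++ y).
Proof. intro H. apply cong_cat; [apply cong_refl | exact H]. Qed.

Lemma cong_catr (a x y : list S) : cong R x y -> cong R (x ++ a) (y ++ a).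
Proof. intro H. apply cong_cat; [exact H | apply cong_refl]. Qed.

Lemma relR_cong (x y : list S) : relR R x y -> cong R x y.
Proof. intros [H | H]; [apply cong_base | apply cong_sym, cong_base]; exact H. Qed.

Lemma inv_cat (u v : list S) : inv (u ++ v) = inv v ++ inv u.
Proof. unfold inv. rewrite map_app, rev_app_distr. reflexivity. Qed.

Lemma pos_cat (u v : list S) : pos (u ++ v) = pos u ++ pos v.
Proof. apply map_app. Qed.

(* [cayley_path w x y]: w labels a path from the class of x to the class of y
   in the right Cayley graph, a letter (false, s) following an s-edge backwards. *)
Fixpoint cayley_path (w : list (bool * S)) (x y : list S) : Prop :=
  match w with
  | [] => cong R x y
  | (true, s) :: w' => cayley_path w' (x ++ [s]) y
  | (false, s) :: w' => exists z, cong R (z ++ [s]) x /\ cayley_path w' z y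
  end.

Lemma cayley_path_cong w : forall x y x' y',
  cong R x x' -> cong R y y' -> cayley_path w x y -> cayley_path w x' y'.
Proof.
  induction w as [|[[|] s] w IH]; simpl; intros x y x' y' Hx Hy H.
  - apply cong_trans with x; [apply cong_sym; exact Hx|].
    apply cong_trans with y; assumption.
  - exact (IH _ _ _ _ (cong_catr [s] Hx) Hy H).
  - destruct H as [z [Hz H]]. exists z. split.
    + apply cong_trans with x; assumption.
    + exact (IH _ _ _ _ (cong_refl R z) Hy H).
Qed.

Lemma cayley_path_cat w1 : forall w2 x y,
  cayley_path (w1 ++ w2) x y <-> exists m, cayley_path w1 x m /\ cayley_path w2 m y.
Proof.
  induction w1 as [|[[|] s] w1 IH]; simpl; intros w2 x y.
  - split.
    + intro H. exists x. split; [apply cong_refl | exact H].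
    + intros [m [Hm H]]. exact (cayley_path_cong (cong_sym Hm) (cong_refl R y) H).
  - apply IH.
  - split.
    + intros [z [Hz H]]. apply IH in H. destruct H as [m [H1 H2]].
      exists m. split; [exists z; split|]; assumption.
    + intros [m [[z [Hz H1]] H2]]. exists z. split; [exact Hz|].
      apply IH. exists m. split; assumption.
Qed.

Lemma cayley_path_pos v : forall x y, cayley_path (pos v) x y <-> cong R (x ++ v) y.
Proof.
  induction v as [|s v IH]; simpl; intros x y.
  - rewrite app_nil_r. tauto.
  - rewrite IH, <- app_assoc. tauto.
Qed.

Lemma cayley_path_inv u : forall x y, cayley_path (inv u) x y <-> cong R (y ++ u) x.
Proof.
  induction u as [|s u IH]; intros x y.
  - simpl. rewrite app_nil_r. split; apply cong_sym.
  - change (inv (s :: u)) with (inv u ++ [(false, s)]).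
    rewrite cayley_path_cat. split.
    + intros [m [Hu [z [Hz Hzy]]]]. apply IH in Hu.
      apply cong_trans with (m ++ u); [|exact Hu].
      replace (y ++ s :: u) with ((y ++ [s]) ++ u) by (rewrite <- app_assoc; reflexivity).
      apply cong_catr, cong_trans with (z ++ [s]); [|exact Hz].
      apply cong_catr, cong_sym, Hzy.
    + intro H. exists (y ++ [s]). split.
      * apply IH. rewrite <- app_assoc. exact H.
      * exists y. split; apply cong_refl.
Qed.

Lemma rstep_cayley_path w w' x y :
  rstep R w w' -> cayley_path w x y -> cayley_path w' x y.
Proof.
  intros Hstep Hw.
  destruct Hstep as [a b u _ | a b u v u' v' _ _ Hrel];
    apply cayley_path_cat in Hw; destruct Hw as [m [Ha Hw]];
    apply cayley_path_cat in Hw; destruct Hw as [mu [Hu Hw]];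
    apply cayley_path_cat in Hw; destruct Hw as [mv [Hv Hb]];
    apply cayley_path_inv in Hu; apply cayley_path_pos in Hv;
    apply cayley_path_cat; exists m; split; try exact Ha.
  - refine (cayley_path_cong _ (cong_refl R y) Hb).
    apply cong_trans with (mu ++ u); [apply cong_sym|]; assumption.
  - apply cayley_path_cat. exists (m ++ v'). split; [apply cayley_path_pos, cong_refl|].
    apply cayley_path_cat. exists mv. split; [|exact Hb].
    apply cayley_path_inv.
    apply cong_trans with (mu ++ v ++ u'); [rewrite app_assoc; apply cong_catr, cong_sym, Hv|].
    apply cong_trans with (mu ++ u ++ v'); [apply cong_catl, cong_sym, relR_cong, Hrel|].
    rewrite app_assoc. apply cong_catr, Hu.
Qed.

Lemma reverses_cayley_path w w' x y :
  reverses R w w' -> cayley_path w x y -> cayley_path w' x y.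
Proof.
  induction 1 as [|w w1 w2 Hstep _ IH]; intro H; [exact H|].
  exact (IH (rstep_cayley_path Hstep H)).
Qed.

Lemma reverses_sound u v u' v' :
  reverses R (inv u ++ pos v) (pos v' ++ inv u') -> cong R (u ++ v') (v ++ u').
Proof.
  intro Hrev.
  assert (Hpath : cayley_path (inv u ++ pos v) u v).
  { apply cayley_path_cat. exists []. split.
    - apply cayley_path_inv, cong_refl.
    - apply cayley_path_pos, cong_refl. }
  apply (reverses_cayley_path Hrev), cayley_path_cat in Hpath.
  destruct Hpath as [m [Hv' Hu']].
  apply cayley_path_pos in Hv'. apply cayley_path_inv in Hu'.
  apply cong_trans with m; [|apply cong_sym]; assumption.
Qed.

Lemma reverses_nil_sound u v : reverses R (inv u ++ pos v) [] -> cong R u v.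
Proof.
  intro Hrev. rewrite <- (app_nil_r u), <- (app_nil_r v).
  exact (reverses_sound (u' := []) (v' := []) Hrev).
Qed.

Lemma rstep_context w w' c d : rstep R w w' -> rstep R (c ++ w ++ d) (c ++ w' ++ d).
Proof.
  intro H. destruct H as [a b u Hu | a b u v u' v' Hu Hv Hrel].
  - pose proof (rstep_del R (c ++ a) (b ++ d) Hu) as H.
    rewrite <- !app_assoc in H. rewrite <- !app_assoc. exact H.
  - pose proof (@rstep_rel S R (c ++ a) (b ++ d) u v u' v' Hu Hv Hrel) as H.
    rewrite <- !app_assoc in H. rewrite <- !app_assoc. exact H.
Qed.

Lemma reverses_context w w' c d :
  reverses R w w' -> reverses R (c ++ w ++ d) (c ++ w' ++ d).
Proof.
  induction 1; [apply rev_refl|]. eapply rev_step; [apply rstep_context|]; eassumption.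
Qed.

Lemma reverses_trans w1 w2 w3 : reverses R w1 w2 -> reverses R w2 w3 -> reverses R w1 w3.
Proof. induction 1; intros; [assumption|]. eapply rev_step; eauto. Qed.

Lemma reverses_cancel u b : reverses R (inv u ++ pos u ++ b) b.
Proof.
  destruct u as [|s u]; [apply rev_refl|].
  apply rev_step with b; [|apply rev_refl].
  apply (rstep_del R [] b). discriminate.
Qed.

Lemma reverses_nil_of_complement u v u' v' :
  reverses R (inv u ++ pos v) (pos v' ++ inv u') ->
  reverses R (inv (u ++ v') ++ pos (v ++ u')) [].
Proof.
  intro Hrev. rewrite inv_cat, pos_cat, <- !app_assoc.
  apply reverses_trans with (inv v' ++ (pos v' ++ inv u') ++ pos u').
  { rewrite (app_assoc (inv u)). exact (reverses_context (inv v') (pos u') Hrev). }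
  rewrite <- app_assoc. apply reverses_trans with (inv u' ++ pos u'); [apply reverses_cancel|].
  rewrite <- (app_nil_r (pos u')) at 1. apply reverses_cancel.
Qed.

Section ClosedFamily.
Variable S' : list S -> Prop.
Hypothesis S'_letters : forall s, S' [s].
Hypothesis S'_common_multiples : forall u v, S' u -> S' v ->
  exists u' v', S' u' /\ S' v' /\ cong R (u ++ v') (v ++ u').

Lemma word_common_multiple_closed x : forall v, S' v ->
  exists v' y, S' v' /\ cong R (x ++ v') (v ++ y).
Proof.
  induction x as [|s x IH]; intros v Hv.
  - exists v, []. rewrite app_nil_r. split; [exact Hv | apply cong_refl].
  - destruct (S'_common_multiples (S'_letters s) Hv) as [u' [v' [_ [Hv' Hsv]]]].
    destruct (IH v' Hv') as [v'' [y [Hv'' Hxy]]].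
    exists v'', (u' ++ y). split; [exact Hv''|].
    change (s :: x) with ([s] ++ x).
    apply cong_trans with ([s] ++ v' ++ y); [rewrite <- app_assoc; apply cong_catl, Hxy|].
    rewrite !app_assoc. apply cong_catr, Hsv.
Qed.

Lemma common_right_multiple_closed x y : exists a b, cong R (x ++ a) (y ++ b).
Proof.
  revert x. induction y as [|s y IH]; intro x.
  - exists [], x. rewrite app_nil_r. apply cong_refl.
  - destruct (word_common_multiple_closed x (S'_letters s)) as [v' [z [_ Hxz]]].
    destruct (IH z) as [a [b Hab]].
    exists (v' ++ a), b. rewrite app_assoc.
    apply cong_trans with (([s] ++ z) ++ a); [apply cong_catr, Hxz|].
    change ((s :: y) ++ b) with ([s] ++ y ++ b).
    rewrite <- app_assoc. apply cong_catl, Hab.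
Qed.

End ClosedFamily.

End Reversing.

Theorem proposition6p6 (S : Type) (R : list S -> list S -> Prop) :
  inhabited S ->
  (forall x y, R x y -> x <> [] /\ y <> []) ->
  r_complete R ->
  ((forall x y : list S, exists a b : list S, cong R (x ++ a) (y ++ b)) <->
   exists S' : list S -> Prop,
     (forall s : S, S' [s]) /\
     (forall u v, S' u -> S' v ->
        exists u' v', S' u' /\ S' v' /\
          reverses R (inv (u ++ v') ++ pos (v ++ u')) [])).
Proof.
  intros _ _ Hcomplete. split.
  - intros Hmult. exists (fun _ => True). split; [trivial|].
    intros u v _ _. destruct (Hmult u v) as [a [b Hab]].
    destruct (Hcomplete u v b a Hab) as [u'' [v'' [w [Hrev _]]]].
    exists u'', v''. repeat split.
    exact (reverses_nil_of_complement Hrev).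
  - intros [S' [Hletters Hclosed]].
    apply (common_right_multiple_closed Hletters).
    intros u v Hu Hv. destruct (Hclosed u v Hu Hv) as [u' [v' [Hu' [Hv' Hrev]]]].
    exists u', v'. repeat split; try assumption.
    exact (reverses_nil_sound Hrev).
Qed.
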